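(* Assume the setting in the context. Let $x_i, x_j, x_{k_1},\dots,x_{k_m}\in X$ be distinct and $K=\{x_{k_1},\dots,x_{k_m}\}$. Assume that (1) $x_j$ is a visible parent of $x_i$ (w.r.t. $X$), and (2) for each $q=1,\dots,m$, the pair $(x_i,x_j)$ is invisible with respect to $X\setminus\{x_{k_q}\}$. Then all of the following hold: (a) for every $q$: for all $M\subseteq X\setminus\{x_i,x_{k_q}\}$, $N\subseteq X\setminus\{x_j,x_{k_q}\}$ and $G_1,G_2\in\mathcal G$, $x_i-G_1(M)\not\perp\!\!\!\perp x_j-G_2(N)$; (b) for all $M\subseteq X\setminus\{x_i,x_j\}$, $N\subseteq X\setminus\{x_j\}$ and $G_1,G_2\in\mathcal G$, $x_i-G_1(M)\not\perp\!\!\!\perp x_j-G_2(N)$; (c) there exist $Q_1,Q_2\subseteq K$ with $Q_1\cup Q_2=K$, $G_1,G_2\in\mathcal G$ and $M,N\subseteq X\setminus(\{x_i,x_j\}\cup K)$ such that $x_i-G_1(M\cup\{x_j\}\cup Q_1)\perp\!\!\!\perp x_j-G_2(N\cup Q_2)$.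
   Context: Model: $X$ is a finite set of observed random variables and $U$ a finite set of unobserved random variables; $V=X\cup U$ and $G=(V,E)$ is a DAG on $V$. Each $v_i\in V$ satisfies $v_i=\sum_{x_j\in \mathrm{pa}(v_i)\cap X} f^{(i)}_j(x_j)+\sum_{u_k\in\mathrm{pa}(v_i)\cap U} f^{(i)}_k(u_k)+n_i$, where the $f$'s are nonlinear functions and the external noises $n_i$ are jointly independent. ''Parent'', ''ancestor'', ''path'', ''d-separation'' refer to $G$ (a path has distinct vertices). Causal Faithfulness Condition (CFC): any conditional independence among variables of $V$ that is not entailed by d-separation in $G$ does not hold. $\perp\!\!\!\perp$ denotes statistical independence, $\not\perp\!\!\!\perp$ dependence. Function class: $\mathcal G$ is a class of generalized additive functions: for $G\in\mathcal G$ and a set $M$ of observed variables, $G(M)=\sum_{x_m\in M} g_m(x_m)$ (with $G(\emptyset)=0$). It satisfies: for any $x_i,x_j\in X$, sets $M,N\subseteq X$, $G_1,G_2\in\mathcal G$ and external noise $n_k$, if $n_k\not\perp\!\!\!\perp x_i-G_1(M)$ and $n_k\not\perp\!\!\!\perp x_j-G_2(N)$ then $x_i-G_1(M)\not\perp\!\!\!\perp x_j-G_2(N)$. Definitions, for $X'\subseteq X$ and $x_i,x_j\in X'$: an unobserved causal path (UCP) from $x_i$ to $x_j$ w.r.t. $X'$ is a directed path $x_i\to\cdots\to v_k\to x_j$ in $G$ with $v_k\notin X'$; an unobserved backdoor path (UBP) between $x_i$ and $x_j$ w.r.t. $X'$ is a path $x_i\leftarrow v_k\leftarrow\cdots\leftarrow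 v\to\cdots\to v_l\to x_j$ with $v_k,v_l\notin X'$ (allowing $v=v_k$, $v=v_l$, or $v=v_k=v_l$; $v$ may be in $X'$). ''UBP/UCP between $x_i$ and $x_j$'' means a UBP or a UCP in either direction. $x_j$ is a visible parent of $x_i$ w.r.t. $X'$ if $x_j$ is a parent of $x_i$ and there is no UBP/UCP between them w.r.t. $X'$; $(x_i,x_j)$ is a visible non-edge w.r.t. $X'$ if there is no edge between them and no UBP/UCP between them w.r.t. $X'$; $(x_i,x_j)$ is invisible w.r.t. $X'$ if there is a UBP/UCP between them w.r.t. $X'$. When $X'$ is omitted, $X'=X$. Standing facts (taken as known), for $X'\subseteq X$ and distinct $x_i,x_j\in X'$: (F1) $x_j$ is a visible parent of $x_i$ w.r.t. $X'$ iff [for all $G_1,G_2\in\mathcal G$, $M\subseteq X'\setminus\{x_i,x_j\}$, $N\subseteq X'\setminus\{x_j\}$: $x_i-G_1(M)\not\perp\!\!\!\perp x_j-G_2(N)$] and [there exist $G_1,G_2\in\mathcal G$, $M\subseteq X'\setminus\{x_i\}$, $N\subseteq X'\setminus\{x_i,x_j\}$ with $x_i-G_1(M)\perp\!\!\!\perp x_j-G_2(N)$]. (F2) $(x_i,x_j)$ is a visible non-edge w.r.t. $X'$ iff there exist $G_1,G_2\in\mathcal G$ and $M,N\subseteq X'\setminus\{x_i,x_j\}$ with $x_i-G_1(M)\perp\!\!\!\perp x_j-G_2(N)$. (F3) $(x_i,x_j)$ is invisible w.r.t. $X'$ iff for all $M\subseteq X'\setminus\{x_i\}$, $N\subseteq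 X'\setminus\{x_j\}$, $G_1,G_2\in\mathcal G$: $x_i-G_1(M)\not\perp\!\!\!\perp x_j-G_2(N)$. *)

From HB Require Import structures.
From mathcomp Require Import all_boot all_order all_algebra.
From mathcomp Require Import all_classical all_reals all_analysis.

Set Implicit Arguments.
Unset Strict Implicit.
Unset Printing Implicit Defensive.
Import Order.TTheory GRing.Theory Num.Theory.
Local Open Scope ring_scope.

(* [E u v] means there is an edge u -> v.                              *)
Section Graph.
Variables (V : finType) (E : rel V).

Definition dag : Prop := forall u v : V, E u v -> ~~ connect E v u.

(* For a walk a :: t (t nonempty), the vertex just before its last vertex. *)
Definition penult (a : V) (t : seq V) : V := last a (belast a t).

Definition dpath (a : V) (t : seq V) : bool :=
  [&& t != [::], path E a t & uniq (a :: t)].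

(* Unobserved causal path from xi to xj w.r.t. X':
   xi -> ... -> vk -> xj with vk \notin X'. *)
Definition UCP (X' : {set V}) (xi xj : V) : Prop :=
  exists t : seq V, [&& dpath xi t, last xi t == xj & penult xi t \notin X'].

(* Unobserved backdoor path between xi and xj w.r.t. X':
   xi <- vk <- ... <- v -> ... -> vl -> xj  (a path: all vertices distinct),
   with vk, vl \notin X'; v = vk, v = vl, v = vk = vl allowed, v may be in X'.
   The left branch is the directed path v :: t1 ending at xi, the right
   branch the directed path v :: t2 ending at xj. *)
Definition UBP (X' : {set V}) (xi xj : V) : Prop :=
  exists (v : V) (t1 t2 : seq V),
    [&& t1 != [::], t2 != [::], path E v t1, path E v t2,
        uniq (v :: t1 ++ t2), last v t1 == xi, last v t2 == xj,
        penult v t1 \notin X' & penult v t2 \notin X'].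

Definition invisible (X' : {set V}) (xi xj : V) : Prop :=
  UBP X' xi xj \/ UBP X' xj xi \/ UCP X' xi xj \/ UCP X' xj xi.

Definition visible_parent (X' : {set V}) (xi xj : V) : Prop :=
  E xj xi /\ ~ invisible X' xi xj.

Definition visible_nonedge (X' : {set V}) (xi xj : V) : Prop :=
  ~~ E xi xj /\ ~~ E xj xi /\ ~ invisible X' xi xj.

Definition adj (u v : V) : bool := E u v || E v u.

Definition active_at (C : {set V}) (a : V) (s : seq V) (i : nat) : bool :=
  let L := a :: s in
  let w := nth a L i in
  if E (nth a L i.-1) w && E (nth a L i.+1) w   (* w is a collider *)
  then [exists c in C, connect E w c]          (* w or a descendant in C *)
  else w \notin C.

Definition d_connected (C : {set V}) (a b : V) : Prop :=
  exists s : seq V,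
    [&& path adj a s, uniq (a :: s), last a s == b &
        all (active_at C a s) (iota 1 (size s).-1)].

Definition d_separated (A B C : {set V}) : Prop :=
  forall a b, a \in A -> b \in B -> ~ d_connected C a b.

End Graph.

Section Prob.
Local Open Scope classical_set_scope.
Variables (R : realType) (d : measure_display) (Omega : measurableType d)
          (P : probability Omega R).

Definition indep (f g : Omega -> R) : Prop :=
  forall A B : set R, measurable A -> measurable B ->
    P (f @^-1` A `&` g @^-1` B) = (P (f @^-1` A) * P (g @^-1` B))%E.

Definition mutually_indep (V : finType) (n : V -> Omega -> R) : Prop :=
  forall A : V -> set R, (forall v, measurable (A v)) ->
    P [set w | forall v, A v (n v w)] = (\prod_(v : V) P (n v @^-1` A v))%E.

Variables (V : finType) (var : V -> Omega -> R).

Definition sigma_of (C : {set V}) : set (set Omega) :=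
  <<s [set e | exists c A, c \in C /\ measurable A /\ e = var c @^-1` A] >>.

(* conditional independence of (var a)_{a in A} and (var b)_{b in B}
   given (var c)_{c in C}: for every event e of sigma(A), P(e | B, C) has
   a sigma(C)-measurable version (Kallenberg, Prop. 6.6). *)
Definition cond_indep (A B C : {set V}) : Prop :=
  forall e, sigma_of A e ->
    exists phi : Omega -> R,
      (forall D : set R, measurable D -> sigma_of C (phi @^-1` D)) /\
      P.-integrable setT (EFin \o phi) /\
      forall b c, sigma_of B b -> sigma_of C c ->
        (\int[P]_(w in b `&` c) (phi w)%:E = P (e `&` b `&` c))%E.

End Prob.

Definition nonlinear (R : realType) (f : R -> R) : Prop :=
  ~ exists a b : R, forall x, f x = a * x + b.

(* G(M) = \sum_{m in M} g_m(x_m), as a random variable; an element of the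
   class of generalized additive functions is given by its components g. *)
Definition Gadd (R : realType) (Omega : Type) (V : finType)
  (var : V -> Omega -> R) (g : V -> R -> R) (M : {set V}) : Omega -> R :=
  fun w => \sum_(m in M) g m (var m w).

Definition resid (R : realType) (Omega : Type) (V : finType)
  (var : V -> Omega -> R) (xi : V) (g : V -> R -> R) (M : {set V}) :
  Omega -> R :=
  fun w => var xi w - Gadd var g M w.

Section Setting.
Variables (R : realType) (d : measure_display) (Omega : measurableType d)
          (P : probability Omega R) (V : finType) (E : rel V)
          (X : {set V})                       (* observed; U := ~: X *)
          (var : V -> Omega -> R)
          (noise : V -> Omega -> R)
          (f : V -> V -> R -> R)              (* f v u = f^{(v)}_u *)
          (Gc : set (V -> R -> R)).

Definition additive_model : Prop :=
  [/\ dag E,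
      forall v w, var v w = \sum_(u | E u v) f v u (var u w) + noise v w,
      forall v u, E u v -> nonlinear (f v u),
      (forall v u, measurable_fun setT (f v u)) /\
      (forall v, measurable_fun setT (noise v))
    & mutually_indep P noise].

Definition CFC : Prop :=
  forall A B C : {set V},
    [disjoint A & B] -> [disjoint A & C] -> [disjoint B & C] ->
    cond_indep P var A B C -> d_separated E A B C.

Definition class_property : Prop :=
  (forall g, Gc g -> forall v, measurable_fun setT (g v)) /\
  forall (xi xj : V) (M N : {set V}) (g1 g2 : V -> R -> R) (k : V),
    xi \in X -> xj \in X -> M \subset X -> N \subset X -> Gc g1 -> Gc g2 ->
    ~ indep P (noise k) (resid var xi g1 M) ->
    ~ indep P (noise k) (resid var xj g2 N) ->
    ~ indep P (resid var xi g1 M) (resid var xj g2 N).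

Definition fact_F1 : Prop :=
  forall (X' : {set V}) (xi xj : V), X' \subset X -> xi \in X' -> xj \in X' ->
    xi != xj ->
    (visible_parent E X' xi xj <->
     (forall g1 g2 (M N : {set V}), Gc g1 -> Gc g2 ->
        M \subset X' :\: [set xi; xj] -> N \subset X' :\ xj ->
        ~ indep P (resid var xi g1 M) (resid var xj g2 N)) /\
     (exists g1 g2 (M N : {set V}), [/\ Gc g1, Gc g2,
        M \subset X' :\ xi, N \subset X' :\: [set xi; xj] &
        indep P (resid var xi g1 M) (resid var xj g2 N)])).

Definition fact_F2 : Prop :=
  forall (X' : {set V}) (xi xj : V), X' \subset X -> xi \in X' -> xj \in X' ->
    xi != xj ->
    (visible_nonedge E X' xi xj <->
     exists g1 g2 (M N : {set V}), [/\ Gc g1, Gc g2,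
        M \subset X' :\: [set xi; xj], N \subset X' :\: [set xi; xj] &
        indep P (resid var xi g1 M) (resid var xj g2 N)]).

Definition fact_F3 : Prop :=
  forall (X' : {set V}) (xi xj : V), X' \subset X -> xi \in X' -> xj \in X' ->
    xi != xj ->
    (invisible E X' xi xj <->
     forall g1 g2 (M N : {set V}), Gc g1 -> Gc g2 ->
        M \subset X' :\ xi -> N \subset X' :\ xj ->
        ~ indep P (resid var xi g1 M) (resid var xj g2 N)).

End Setting.

(* Invisibility w.r.t. X \ {k} gives
   (a) through (F3), and visibility of the parent x_j gives (b) together with
   an independent pair of residuals through (F1).  In that pair x_j must be
   regressed out of x_i, for otherwise (b) is contradicted, and every k in K
   must be regressed out of one side, for otherwise (a) is contradicted;
   splitting the two regressor sets along K yields (c). *)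
From HB Require Import structures.
From mathcomp Require Import all_boot all_order all_algebra.
From mathcomp Require Import all_classical all_reals all_analysis.
From mathcomp Require Import fintype finset.

Local Open Scope ring_scope.

Lemma setD_setU_setI {T : finType} (M S K : {set T}) :
  M :\: (S :|: K) :|: M :&: S :|: M :&: K = M.
Proof. by rewrite -setUA -setIUr setUC setID. Qed.

Lemma setD2_setD1 {T : finType} (A : {set T}) (x y : T) :
  A :\: [set x; y] = A :\ x :\ y.
Proof. by rewrite setDDl. Qed.

Section ResidualDependence.
Context {R : realType} {d : measure_display} {Omega : measurableType d}
        {P : probability Omega R} {V : finType} {var : V -> Omega -> R}
        {Gc : set (V -> R -> R)} {xi xj : V}.

Definition residuals_dependent (A B : {set V}) : Prop :=
  forall g1 g2 (M N : {set V}), Gc g1 -> Gc g2 ->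
    M \subset A -> N \subset B ->
    ~ indep P (resid var xi g1 M) (resid var xj g2 N).

Lemma invisible_residuals_dependent {E : rel V} {X : {set V}} {k : V} :
  fact_F3 P E X var Gc -> xi \in X -> xj \in X -> xi != xj ->
  k != xi -> k != xj -> invisible E (X :\ k) xi xj ->
  residuals_dependent (X :\: [set xi; k]) (X :\: [set xj; k]).
Proof.
move=> F3 Xxi Xxj nij nki nkj inv.
have XkXi : xi \in X :\ k by rewrite !inE eq_sym nki.
have XkXj : xj \in X :\ k by rewrite !inE eq_sym nkj.
have dep := (F3 (X :\ k) xi xj (subsetDl X [set k]) XkXi XkXj nij).1 inv.
have swap x : X :\: [set x; k] = X :\ k :\ x by rewrite setDDl setUC.
by rewrite !swap.
Qed.

Context {X K : {set V}}.
Hypothesis dep_K : forall k, k \in K ->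
  residuals_dependent (X :\: [set xi; k]) (X :\: [set xj; k]).
Hypothesis dep_parent : residuals_dependent (X :\: [set xi; xj]) (X :\ xj).

Lemma independent_residuals_split {g1 g2} {M N : {set V}} :
  Gc g1 -> Gc g2 -> M \subset X :\ xi -> N \subset X :\: [set xi; xj] ->
  indep P (resid var xi g1 M) (resid var xj g2 N) ->
  exists (Q1 Q2 : {set V}) g1 g2 (M N : {set V}),
    [/\ Q1 \subset K, Q2 \subset K, Q1 :|: Q2 = K, Gc g1 & Gc g2] /\
    [/\ M \subset X :\: ([set xi; xj] :|: K),
        N \subset X :\: ([set xi; xj] :|: K) &
        indep P (resid var xi g1 (M :|: [set xj] :|: Q1))
                (resid var xj g2 (N :|: Q2))].
Proof.
move=> G1 G2 sM sN ind.
have sNj : N \subset X :\ xj.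
  by apply: subset_trans sN (setDS _ _); rewrite sub1set !inE eqxx orbT.
have Mxj : xj \in M.
  apply/negPn/negP => nMxj; apply: (dep_parent _ _ _ _ G1 G2 _ sNj ind).
  by rewrite setD2_setD1; apply/subsetD1P.
have cover k : k \in K -> k \in M :|: N.
  rewrite inE => Kk; apply/negPn/negP => /norP[nMk nNk].
  apply: (dep_K k Kk _ _ _ _ G1 G2 _ _ ind);
    by rewrite setD2_setD1; apply/subsetD1P.
have MS : M :&: [set xi; xj] = [set xj].
  have /subsetD1P[_ nMxi] := sM.
  apply/setP => x; rewrite !inE; case: (x =P xj) => [-> | _].
    by rewrite Mxj orbT.
  by rewrite orbF; apply/negbTE; apply: contra nMxi => /andP[Mx /eqP <-].
have NS : N :&: [set xi; xj] = set0.
  by apply: disjoint_setI0; move: sN; rewrite subsetD => /andP[].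
exists (M :&: K), (N :&: K), g1, g2,
  (M :\: ([set xi; xj] :|: K)), (N :\: ([set xi; xj] :|: K)).
split; first split => //; rewrite ?subsetIr //.
  by rewrite -setIUl; apply/setIidPr/subsetP.
split.
- exact: setSD (subset_trans sM (subsetDl _ _)).
- exact: setSD (subset_trans sN (subsetDl _ _)).
- have := setD_setU_setI M [set xi; xj] K; rewrite MS => ->.
  by have := setD_setU_setI N [set xi; xj] K; rewrite NS setU0 => ->.
Qed.

End ResidualDependence.

Theorem lemma5 (R : realType) (d : measure_display) (Omega : measurableType d)
  (P : probability Omega R) (V : finType) (E : rel V) (X : {set V})
  (var noise : V -> Omega -> R) (f : V -> V -> R -> R)
  (Gc : set (V -> R -> R))
  (Hmodel : additive_model P E var noise f)
  (HCFC : CFC P E var)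
  (Hclass : class_property P X var noise Gc)
  (HF1 : fact_F1 P E X var Gc)
  (HF2 : fact_F2 P E X var Gc)
  (HF3 : fact_F3 P E X var Gc)
  (xi xj : V) (K : {set V})
  (Hxi : xi \in X) (Hxj : xj \in X) (Hij : xi != xj)
  (HK : K \subset X) (HiK : xi \notin K) (HjK : xj \notin K)
  (H1 : visible_parent E X xi xj)
  (H2 : forall k, k \in K -> invisible E (X :\ k) xi xj) :
  (* (a) *)
  (forall k, k \in K ->
     forall g1 g2 (M N : {set V}), Gc g1 -> Gc g2 ->
       M \subset X :\: [set xi; k] -> N \subset X :\: [set xj; k] ->
       ~ indep P (resid var xi g1 M) (resid var xj g2 N)) /\
  (* (b) *)
  (forall g1 g2 (M N : {set V}), Gc g1 -> Gc g2 ->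
     M \subset X :\: [set xi; xj] -> N \subset X :\ xj ->
     ~ indep P (resid var xi g1 M) (resid var xj g2 N)) /\
  (* (c) *)
  (exists (Q1 Q2 : {set V}) g1 g2 (M N : {set V}),
     [/\ Q1 \subset K, Q2 \subset K, Q1 :|: Q2 = K, Gc g1 & Gc g2] /\
     [/\ M \subset X :\: ([set xi; xj] :|: K),
         N \subset X :\: ([set xi; xj] :|: K) &
         indep P (resid var xi g1 (M :|: [set xj] :|: Q1))
                 (resid var xj g2 (N :|: Q2))]).
Proof.
have dep_K k (Kk : k \in K) :=
  invisible_residuals_dependent HF3 Hxi Hxj Hij
    (memPn HiK k Kk) (memPn HjK k Kk) (H2 k Kk).
have [dep_parent [g1 [g2 [M [N [G1 G2 sM sN ind]]]]]] :=
  (HF1 X xi xj (subxx X) Hxi Hxj Hij).1 H1.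
split; [exact: dep_K | split; [exact: dep_parent |]].
by have := independent_residuals_split dep_K dep_parent G1 G2 sM sN ind.
Qed.
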